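(* Let $\mathbf A$ be a non-trivial finite Cornish algebra of type $F=F^+\,\dot\cup\,F^-$. If $F^-=\emptyset$, then $\mathbf A$ is not quasi-primal.
   Context: Let $F=F^+\,\dot\cup\,F^-$ be a set of unary operation symbols. A Cornish algebra of type $F$ is an algebra $\langle A;\vee,\wedge,\{f^{\mathbf A}\}_{f\in F},0,1\rangle$ whose reduct $\langle A;\vee,\wedge,0,1\rangle$ is a bounded distributive lattice, with $f^{\mathbf A}$ an endomorphism of that bounded lattice for $f\in F^+$ and a dual endomorphism for $f\in F^-$. A finite algebra is quasi-primal if the ternary discriminator ($\tau(x,y,z)=x$ if $x\ne y$, $=z$ if $x=y$) is a term function of it. *)

From HB Require Import structures.
From mathcomp Require Import all_boot all_order.
Set Implicit Arguments. Unset Strict Implicit. Unset Printing Implicit Defensive.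
Import Order.TTheory.
Local Open Scope order_scope.

(* The carrier is a finite bounded distributive lattice (finTBDistrLatticeType),
   the unary operation symbols form an arbitrary type F, and
   [pos : F -> bool] splits F into F^+ (pos f = true) and F^- (pos f = false). *)

Definition is_bendo d (L : tbDistrLatticeType d) (h : L -> L) : Prop :=
  [/\ forall x y, h (x `|` y) = h x `|` h y,
      forall x y, h (x `&` y) = h x `&` h y,
      h \bot = \bot & h \top = \top].

Definition is_dual_bendo d (L : tbDistrLatticeType d) (h : L -> L) : Prop :=
  [/\ forall x y, h (x `|` y) = h x `&` h y,
      forall x y, h (x `&` y) = h x `|` h y,
      h \bot = \top & h \top = \bot].

Definition cornish_algebra (F : Type) (pos : F -> bool) d
    (L : tbDistrLatticeType d) (ops : F -> L -> L) : Prop :=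
  forall f, if pos f then is_bendo (ops f) else is_dual_bendo (ops f).

Inductive term (F : Type) (n : nat) : Type :=
  | TVar of 'I_n
  | TBot
  | TTop
  | TJoin of term F n & term F n
  | TMeet of term F n & term F n
  | TApp of F & term F n.

Fixpoint eval_term (F : Type) (n : nat) d (L : tbDistrLatticeType d)
    (ops : F -> L -> L) (e : 'I_n -> L) (t : term F n) : L :=
  match t with
  | TVar i => e i
  | TBot => \bot
  | TTop => \top
  | TJoin t1 t2 => eval_term ops e t1 `|` eval_term ops e t2
  | TMeet t1 t2 => eval_term ops e t1 `&` eval_term ops e t2
  | TApp f t1 => ops f (eval_term ops e t1)
  end.

Definition discriminator (T : eqType) (x y z : T) : T := if x != y then x else z.

Definition env3 (T : Type) (x y z : T) (i : 'I_3) : T :=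
  match val i with 0 => x | 1 => y | _ => z end.

Definition quasi_primal (F : Type) d (L : finTBDistrLatticeType d)
    (ops : F -> L -> L) : Prop :=
  exists t : term F 3, forall x y z : L,
    eval_term ops (env3 x y z) t = discriminator x y z.

(* Without dual endomorphisms every basic operation is monotone, hence so is
   every term function.  The discriminator is not: it sends (0, 0, 1) to 1 and
   (0, 1, 1) to 0, although (0, 0, 1) <= (0, 1, 1) and 0 < 1 in a non-trivial
   lattice. *)

From mathcomp Require Import all_boot all_order.
Set Implicit Arguments. Unset Strict Implicit. Unset Printing Implicit Defensive.
Import Order.TTheory.
Local Open Scope order_scope.

Lemma bendo_homo d (L : tbDistrLatticeType d) (h : L -> L) :
  is_bendo h -> {homo h : x y / x <= y}.
Proof. by move=> [hU _ _ _] x y; rewrite !leEjoin -hU => /eqP ->. Qed.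

Lemma eval_term_homo (F : Type) d (L : tbDistrLatticeType d)
    (ops : F -> L -> L) (n : nat) (e e' : 'I_n -> L) (t : term F n) :
  (forall f, {homo ops f : x y / x <= y}) ->
  (forall i, e i <= e' i) -> eval_term ops e t <= eval_term ops e' t.
Proof.
move=> ops_homo le_e; elim: t => /= [i|||t1 IH1 t2 IH2|t1 IH1 t2 IH2|f t IH].
- exact: le_e.
- exact: le0x.
- exact: lex1.
- exact: leU2.
- exact: leI2.
- exact: ops_homo.
Qed.

Lemma card_gt1_bot_neq_top d (L : finTBDistrLatticeType d) :
  1 < #|{: L}| -> (\bot : L) != \top.
Proof.
move=> /card_gt1P[x [y [_ _]]]; apply: contraNneq => bot_top.
have all_bot (z : L) : z = \bot by apply/le_anti; rewrite le0x bot_top lex1.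
by rewrite (all_bot x) (all_bot y).
Qed.

Lemma homo_ops_not_quasi_primal (F : Type) d (L : finTBDistrLatticeType d)
    (ops : F -> L -> L) :
  (forall f, {homo ops f : x y / x <= y}) -> (\bot : L) != \top ->
  ~ quasi_primal ops.
Proof.
move=> ops_homo bot_top [t discr_t].
have le_env (i : 'I_3) : env3 (\bot : L) \bot \top i <= env3 \bot \top \top i.
  by case: i => [[|[|[|i]]] hi] //=; rewrite ?lexx ?le0x.
have := eval_term_homo t ops_homo le_env.
rewrite !discr_t /discriminator eqxx bot_top /= => top_le_bot.
by move: bot_top; rewrite eq_le le0x top_le_bot.
Qed.

Theorem theorem5p7 (F : Type) (pos : F -> bool) (d : Order.disp_t)
    (L : finTBDistrLatticeType d) (ops : F -> L -> L) :
  cornish_algebra pos ops ->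
  1 < #|{: L}| ->
  (forall f : F, pos f = true) ->
  ~ quasi_primal ops.
Proof.
move=> cornish card_gt1 all_pos.
apply: homo_ops_not_quasi_primal; last exact: card_gt1_bot_neq_top.
by move=> f; apply: bendo_homo; have := cornish f; rewrite all_pos.
Qed.
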